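(* For all metric formulas $\varphi,\psi,\chi$ the following equivalences hold in MHT: $\bigcirc_I(\varphi\vee\psi)\equiv\bigcirc_I\varphi\vee\bigcirc_I\psi$; $\bigcirc_I(\varphi\wedge\psi)\equiv\bigcirc_I\varphi\wedge\bigcirc_I\psi$; $\widehat{\bigcirc}_I(\varphi\vee\psi)\equiv\widehat{\bigcirc}_I\varphi\vee\widehat{\bigcirc}_I\psi$; $\widehat{\bigcirc}_I(\varphi\wedge\psi)\equiv\widehat{\bigcirc}_I\varphi\wedge\widehat{\bigcirc}_I\psi$; $\Diamond_I(\varphi\vee\psi)\equiv\Diamond_I\varphi\vee\Diamond_I\psi$; $\Box_I(\varphi\wedge\psi)\equiv\Box_I\varphi\wedge\Box_I\psi$; $\widehat{\bullet}_I(\varphi\vee\psi)\equiv\widehat{\bullet}_I\varphi\vee\widehat{\bullet}_I\psi$; $\widehat{\bullet}_I(\varphi\wedge\psi)\equiv\widehat{\bullet}_I\varphi\wedge\widehat{\bullet}_I\psi$; $\top\,\mathsf{S}_I\,(\varphi\vee\psi)\equiv(\top\,\mathsf{S}_I\,\varphi)\vee(\top\,\mathsf{S}_I\,\psi)$; $(\varphi\vee\chi)\,\mathsf{T}_I\,\psi\equiv(\varphi\,\mathsf{T}_I\,\psi)\vee(\chi\,\mathsf{T}_I\,\psi)$; $\varphi\,\mathsf{U}_I\,(\chi\vee\psi)\equiv(\varphi\,\mathsf{U}_I\,\chi)\vee(\varphi\,\mathsf{U}_I\,\psi)$; $(\varphi\wedge\chi)\,\mathsf{U}_I\,\psi\equiv(\varphi\,\mathsf{U}_I\,\psi)\wedge(\chi\,\mathsf{U}_I\,\psi)$;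 $\varphi\,\mathsf{R}_I\,(\chi\wedge\psi)\equiv(\varphi\,\mathsf{R}_I\,\chi)\wedge(\varphi\,\mathsf{R}_I\,\psi)$; $(\varphi\vee\chi)\,\mathsf{R}_I\,\psi\equiv(\varphi\,\mathsf{R}_I\,\psi)\vee(\chi\,\mathsf{R}_I\,\psi)$; $(\varphi\wedge\chi)\,\mathsf{S}_I\,\psi\equiv(\varphi\,\mathsf{S}_I\,\psi)\wedge(\chi\,\mathsf{S}_I\,\psi)$; $\varphi\,\mathsf{S}_I\,(\chi\vee\psi)\equiv(\varphi\,\mathsf{S}_I\,\chi)\vee(\varphi\,\mathsf{S}_I\,\psi)$; $\bullet_I(\varphi\vee\psi)\equiv\bullet_I\varphi\vee\bullet_I\psi$; $\bullet_I(\varphi\wedge\psi)\equiv\bullet_I\varphi\wedge\bullet_I\psi$; $\blacksquare_I(\varphi\wedge\psi)\equiv\blacksquare_I\varphi\wedge\blacksquare_I\psi$; $\varphi\,\mathsf{T}_I\,(\chi\wedge\psi)\equiv(\varphi\,\mathsf{T}_I\,\chi)\wedge(\varphi\,\mathsf{T}_I\,\psi)$.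
   Context: Metric formulas over $\mathcal{A}$: $\varphi ::= p \mid \bot \mid \varphi_1\otimes\varphi_2 \mid \bullet_I\varphi \mid \varphi_1\,\mathsf{S}_I\,\varphi_2 \mid \varphi_1\,\mathsf{T}_I\,\varphi_2 \mid \bigcirc_I\varphi \mid \varphi_1\,\mathsf{U}_I\,\varphi_2 \mid \varphi_1\,\mathsf{R}_I\,\varphi_2$, $\otimes\in\{\to,\wedge,\vee\}$, $I=[m,n)$, $m\in\mathbb{N}$, $n\in\mathbb{N}\cup\{\omega\}$. Derived: $\neg\varphi=\varphi\to\bot$, $\top=\neg\bot$, $\blacksquare_I\varphi=\bot\,\mathsf{T}_I\,\varphi$ (always before), $\top\,\mathsf{S}_I\,\varphi$ (eventually before), $\widehat{\bullet}_I\varphi=\bullet_I\varphi\vee\neg\bullet_I\top$, $\Box_I\varphi=\bot\,\mathsf{R}_I\,\varphi$, $\Diamond_I\varphi=\top\,\mathsf{U}_I\,\varphi$, $\widehat{\bigcirc}_I\varphi=\bigcirc_I\varphi\vee\neg\bigcirc_I\top$. Timed HT-trace $\mathbf{M}=(\langle\mathbf{H},\mathbf{T}\rangle,\tau)$ of length $\lambda$: $H_i\subseteq T_i\subseteq\mathcal{A}$, $\tau:[0,\lambda)\to\mathbb{N}$, $\tau(0)=0$, $\tau(i)\le\tau(i+1)$. Satisfaction at $k$: $\bot$ never; $p$ iff $p\in H_k$; $\wedge,\vee$ usual; $\varphi\to\psi$ iff for both $\mathbf{M}'=\mathbf{M}$ and $\mathbf{M}'=(\langle\mathbf{T},\mathbf{T}\rangle,\tau)$,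 $\mathbf{M}',k\not\models\varphi$ or $\mathbf{M}',k\models\psi$; $\bullet_I\varphi$: $k>0$, $\varphi$ at $k-1$, $\tau(k)-\tau(k-1)\in I$; $\varphi\,\mathsf{S}_I\,\psi$: some $j\in[0,k]$ with $\tau(k)-\tau(j)\in I$, $\psi$ at $j$, $\varphi$ at all $i\in(j,k]$; $\varphi\,\mathsf{T}_I\,\psi$: for all such $j$, $\psi$ at $j$ or $\varphi$ at some $i\in(j,k]$; $\bigcirc_I\varphi$: $k+1<\lambda$, $\varphi$ at $k+1$, $\tau(k+1)-\tau(k)\in I$; $\varphi\,\mathsf{U}_I\,\psi$: some $j\in[k,\lambda)$ with $\tau(j)-\tau(k)\in I$, $\psi$ at $j$, $\varphi$ at all $i\in[k,j)$; $\varphi\,\mathsf{R}_I\,\psi$: for all such $j$, $\psi$ at $j$ or $\varphi$ at some $i\in[k,j)$. $\varphi\equiv\psi$ in MHT iff $\mathbf{M},k\models\varphi\leftrightarrow\psi$ for all timed HT-traces $\mathbf{M}$ and all $k$. *)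

From Stdlib Require Import Arith.

Set Implicit Arguments.

(* Extended naturals: Fin n or omega (None). *)
Definition enat := option nat.

Definition lt_enat (k : nat) (lam : enat) : Prop :=
  match lam with Some n => k < n | None => True end.

(* Intervals I = [m, n) with m in nat and n in nat U {omega} *)
Record interval := Itv { ilo : nat; ihi : enat }.

Definition in_itv (d : nat) (I : interval) : Prop :=
  ilo I <= d /\ lt_enat d (ihi I).

Inductive formula (A : Type) : Type :=
| Atom : A -> formula A
| Bot : formula A
| Imp : formula A -> formula A -> formula A
| And : formula A -> formula A -> formula A
| Or  : formula A -> formula A -> formula A
| Prev : interval -> formula A -> formula A
| Since : interval -> formula A -> formula A -> formula A
| Trigger : interval -> formula A -> formula A -> formula A
| Next : interval -> formula A -> formula A
| Until : interval -> formula A -> formula A -> formula A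
| Release : interval -> formula A -> formula A -> formula A.

Arguments Bot {A}.

Definition Neg {A} (f : formula A) : formula A := Imp f Bot.
Definition Top {A} : formula A := Neg Bot.
Definition Iff {A} (f g : formula A) : formula A := And (Imp f g) (Imp g f).
Definition AlwaysBefore {A} (I : interval) (f : formula A) : formula A :=
  Trigger I Bot f.
Definition EventuallyBefore {A} (I : interval) (f : formula A) : formula A :=
  Since I Top f.
Definition WPrev {A} (I : interval) (f : formula A) : formula A :=
  Or (Prev I f) (Neg (Prev I Top)).
Definition Always {A} (I : interval) (f : formula A) : formula A :=
  Release I Bot f.
Definition Eventually {A} (I : interval) (f : formula A) : formula A :=
  Until I Top f.
Definition WNext {A} (I : interval) (f : formula A) : formula A :=
  Or (Next I f) (Neg (Next I Top)).

(* Timed HT-trace of length lam (lam in nat U {omega}). Positions are the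
   k with lt_enat k lam; values at other positions are irrelevant. *)
Record trace (A : Type) := Trace {
  tlen : enat;
  tH : nat -> A -> Prop;
  tT : nat -> A -> Prop;
  ttau : nat -> nat;
  tHT : forall i a, lt_enat i tlen -> tH i a -> tT i a;
  ttau0 : ttau 0 = 0;
  ttau_mono : forall i, lt_enat (S i) tlen -> ttau i <= ttau (S i)
}.

(* Satisfaction: [H] is the "here" component currently in use; the "there"
   component T, timing tau and length lam are fixed. *)
Fixpoint sat {A} (lam : enat) (tau : nat -> nat) (T : nat -> A -> Prop)
  (H : nat -> A -> Prop) (k : nat) (f : formula A) {struct f} : Prop :=
  match f with
  | Atom p => H k p
  | Bot => False
  | And f g => sat lam tau T H k f /\ sat lam tau T H k g
  | Or f g => sat lam tau T H k f \/ sat lam tau T H k g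
  | Imp f g => (sat lam tau T H k f -> sat lam tau T H k g) /\
               (sat lam tau T T k f -> sat lam tau T T k g)
  | Prev J f => 0 < k /\ sat lam tau T H (k - 1) f /\
                in_itv (tau k - tau (k - 1)) J
  | Since J f g => exists j, j <= k /\ in_itv (tau k - tau j) J /\
                   sat lam tau T H j g /\
                   (forall i, j < i -> i <= k -> sat lam tau T H i f)
  | Trigger J f g => forall j, j <= k -> in_itv (tau k - tau j) J ->
                   sat lam tau T H j g \/
                   (exists i, j < i /\ i <= k /\ sat lam tau T H i f)
  | Next J f => lt_enat (S k) lam /\ sat lam tau T H (S k) f /\
                in_itv (tau (S k) - tau k) J
  | Until J f g => exists j, k <= j /\ lt_enat j lam /\
                   in_itv (tau j - tau k) J /\ sat lam tau T H j g /\
                   (forall i, k <= i -> i < j -> sat lam tau T H i f)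
  | Release J f g => forall j, k <= j -> lt_enat j lam ->
                   in_itv (tau j - tau k) J ->
                   sat lam tau T H j g \/
                   (exists i, k <= i /\ i < j /\ sat lam tau T H i f)
  end.

Definition models {A} (M : trace A) (k : nat) (f : formula A) : Prop :=
  sat (tlen M) (ttau M) (tT M) (tH M) k f.

Definition mht_equiv {A} (f g : formula A) : Prop :=
  forall (M : trace A) (k : nat), lt_enat k (tlen M) -> models M k (Iff f g).

(** Every equivalence already holds pointwise, for an arbitrary "here"
    valuation, so the implication in MHT equivalence holds both under the
    "here" and the "there" component.  Pointwise, most cases merely commute a
    quantifier over positions with a connective.  The four that distribute an
    [exists]-[forall] prefix over [/\] ([U], [S] in their left argument) or a
    [forall]-[exists] prefix over [\/] ([T], [R] in their left argument) hold
    because the guard intervals [[k, j)] resp. [(j, k]] are totally ordered by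
    inclusion: of two witnesses, take the one with the smaller guard. *)

From Stdlib Require Import Arith Lia Classical.

Set Implicit Arguments.

Definition nested {X Y : Type} (B : X -> Y -> Prop) : Prop :=
  forall j1 j2, (forall i, B j1 i -> B j2 i) \/ (forall i, B j2 i -> B j1 i).

Lemma nested_future (k : nat) : nested (fun j i => k <= i /\ i < j).
Proof. intros j1 j2; destruct (le_ge_dec j1 j2); [left | right]; lia. Qed.

Lemma nested_past (k : nat) : nested (fun j i => j < i /\ i <= k).
Proof. intros j1 j2; destruct (le_ge_dec j1 j2); [right | left]; lia. Qed.

Section NestedGuards.

Variables (X Y : Type) (B : X -> Y -> Prop).
Hypothesis B_nested : nested B.

Lemma nested_ex_forall_and (P : X -> Prop) (F G : Y -> Prop) :
  (exists j, P j /\ forall i, B j i -> F i) ->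
  (exists j, P j /\ forall i, B j i -> G i) ->
  exists j, P j /\ forall i, B j i -> F i /\ G i.
Proof.
  intros [j1 [P1 F1]] [j2 [P2 G2]].
  destruct (B_nested j1 j2) as [sub12 | sub21].
  - exists j1; split; [exact P1 |]; intros i Bi; auto.
  - exists j2; split; [exact P2 |]; intros i Bi; auto.
Qed.

Lemma nested_forall_ex_or (P Q : X -> Prop) (F G : Y -> Prop) :
  (forall j, P j -> Q j \/ exists i, B j i /\ (F i \/ G i)) ->
  (forall j, P j -> Q j \/ exists i, B j i /\ F i) \/
  (forall j, P j -> Q j \/ exists i, B j i /\ G i).
Proof.
  intros all_FG.
  apply NNPP; intros [bad_F bad_G]%not_or_and.
  apply not_all_ex_not in bad_F as [j1 bad_F].
  apply not_all_ex_not in bad_G as [j2 bad_G].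
  assert (witness_F : P j1 /\ ~ Q j1 /\ ~ exists i, B j1 i /\ F i) by tauto.
  assert (witness_G : P j2 /\ ~ Q j2 /\ ~ exists i, B j2 i /\ G i) by tauto.
  destruct (B_nested j1 j2) as [sub12 | sub21].
  - destruct (all_FG j1) as [Qj1 | (i & Bi & [Fi | Gi])]; firstorder.
  - destruct (all_FG j2) as [Qj2 | (i & Bi & [Fi | Gi])]; firstorder.
Qed.

End NestedGuards.

Section Satisfaction.

Variables (A : Type) (lam : enat) (tau : nat -> nat) (T H : nat -> A -> Prop).

Local Notation "k |= f" := (sat lam tau T H k f) (at level 70).

Lemma sat_Until_And_l k J (f g h : formula A) :
  k |= Until J (And f g) h <-> k |= Until J f h /\ k |= Until J g h.
Proof.
  simpl; split; [firstorder |]; intros [Uf Ug].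
  destruct (nested_ex_forall_and (nested_future k)
    (fun j => k <= j /\ lt_enat j lam /\ in_itv (tau j - tau k) J /\ j |= h)
    (fun i => i |= f) (fun i => i |= g)) as (j & Pj & FGj); firstorder.
Qed.

Lemma sat_Since_And_l k J (f g h : formula A) :
  k |= Since J (And f g) h <-> k |= Since J f h /\ k |= Since J g h.
Proof.
  simpl; split; [firstorder |]; intros [Sf Sg].
  destruct (nested_ex_forall_and (nested_past k)
    (fun j => j <= k /\ in_itv (tau k - tau j) J /\ j |= h)
    (fun i => i |= f) (fun i => i |= g)) as (j & Pj & FGj); firstorder.
Qed.

Lemma sat_Release_Or_l k J (f g h : formula A) :
  k |= Release J (Or f g) h <-> k |= Release J f h \/ k |= Release J g h.
Proof.
  simpl; split; [| firstorder]; intros R.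
  destruct (nested_forall_ex_or (nested_future k)
    (fun j => k <= j /\ lt_enat j lam /\ in_itv (tau j - tau k) J)
    (fun j => j |= h) (fun i => i |= f) (fun i => i |= g)) as [Rf | Rg].
  - intros j (kj & jlam & jJ).
    destruct (R j kj jlam jJ) as [hj | (i & ki & ij & fgi)]; [left | right]; eauto.
  - left; intros j kj jlam jJ.
    destruct (Rf j (conj kj (conj jlam jJ))) as [hj | (i & [ki ij] & fi)]; eauto.
  - right; intros j kj jlam jJ.
    destruct (Rg j (conj kj (conj jlam jJ))) as [hj | (i & [ki ij] & gi)]; eauto.
Qed.

Lemma sat_Trigger_Or_l k J (f g h : formula A) :
  k |= Trigger J (Or f g) h <-> k |= Trigger J f h \/ k |= Trigger J g h.
Proof.
  simpl; split; [| firstorder]; intros Tr.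
  destruct (nested_forall_ex_or (nested_past k)
    (fun j => j <= k /\ in_itv (tau k - tau j) J)
    (fun j => j |= h) (fun i => i |= f) (fun i => i |= g)) as [Tf | Tg].
  - intros j (jk & jJ).
    destruct (Tr j jk jJ) as [hj | (i & ji & ik & fgi)]; [left | right]; eauto.
  - left; intros j jk jJ.
    destruct (Tf j (conj jk jJ)) as [hj | (i & [ji ik] & fi)]; eauto.
  - right; intros j jk jJ.
    destruct (Tg j (conj jk jJ)) as [hj | (i & [ji ik] & gi)]; eauto.
Qed.

Lemma sat_Release_And_r k J (f g h : formula A) :
  k |= Release J f (And g h) <-> k |= Release J f g /\ k |= Release J f h.
Proof.
  simpl; split.
  - intros R; split; intros j kj jlam jJ;
      destruct (R j kj jlam jJ) as [[gj hj] | before]; auto.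
  - intros [Rg Rh] j kj jlam jJ.
    destruct (Rg j kj jlam jJ) as [gj | before]; auto.
    destruct (Rh j kj jlam jJ) as [hj | before]; auto.
Qed.

Lemma sat_Trigger_And_r k J (f g h : formula A) :
  k |= Trigger J f (And g h) <-> k |= Trigger J f g /\ k |= Trigger J f h.
Proof.
  simpl; split.
  - intros Tr; split; intros j jk jJ;
      destruct (Tr j jk jJ) as [[gj hj] | after]; auto.
  - intros [Tg Th] j jk jJ.
    destruct (Tg j jk jJ) as [gj | after]; auto.
    destruct (Th j jk jJ) as [hj | after]; auto.
Qed.

End Satisfaction.

Lemma mht_equiv_of_sat_iff {A} (f g : formula A) :
  (forall lam tau T H k, sat lam tau T H k f <-> sat lam tau T H k g) ->
  mht_equiv f g.
Proof. intros fg M k _; unfold models; simpl; rewrite !fg; tauto. Qed.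

Theorem proposition7 (A : Type) (I : interval) (phi psi chi : formula A) :
  mht_equiv (Next I (Or phi psi)) (Or (Next I phi) (Next I psi)) /\
  mht_equiv (Next I (And phi psi)) (And (Next I phi) (Next I psi)) /\
  mht_equiv (WNext I (Or phi psi)) (Or (WNext I phi) (WNext I psi)) /\
  mht_equiv (WNext I (And phi psi)) (And (WNext I phi) (WNext I psi)) /\
  mht_equiv (Eventually I (Or phi psi)) (Or (Eventually I phi) (Eventually I psi)) /\
  mht_equiv (Always I (And phi psi)) (And (Always I phi) (Always I psi)) /\
  mht_equiv (WPrev I (Or phi psi)) (Or (WPrev I phi) (WPrev I psi)) /\
  mht_equiv (WPrev I (And phi psi)) (And (WPrev I phi) (WPrev I psi)) /\
  mht_equiv (Since I Top (Or phi psi)) (Or (Since I Top phi) (Since I Top psi)) /\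
  mht_equiv (Trigger I (Or phi chi) psi) (Or (Trigger I phi psi) (Trigger I chi psi)) /\
  mht_equiv (Until I phi (Or chi psi)) (Or (Until I phi chi) (Until I phi psi)) /\
  mht_equiv (Until I (And phi chi) psi) (And (Until I phi psi) (Until I chi psi)) /\
  mht_equiv (Release I phi (And chi psi)) (And (Release I phi chi) (Release I phi psi)) /\
  mht_equiv (Release I (Or phi chi) psi) (Or (Release I phi psi) (Release I chi psi)) /\
  mht_equiv (Since I (And phi chi) psi) (And (Since I phi psi) (Since I chi psi)) /\
  mht_equiv (Since I phi (Or chi psi)) (Or (Since I phi chi) (Since I phi psi)) /\
  mht_equiv (Prev I (Or phi psi)) (Or (Prev I phi) (Prev I psi)) /\
  mht_equiv (Prev I (And phi psi)) (And (Prev I phi) (Prev I psi)) /\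
  mht_equiv (AlwaysBefore I (And phi psi)) (And (AlwaysBefore I phi) (AlwaysBefore I psi)) /\
  mht_equiv (Trigger I phi (And chi psi)) (And (Trigger I phi chi) (Trigger I phi psi)).
Proof.
  repeat match goal with |- _ /\ _ => split end;
    apply mht_equiv_of_sat_iff; intros lam tau T H k;
    first [ exact (sat_Trigger_Or_l lam tau T H k I phi chi psi)
          | exact (sat_Until_And_l lam tau T H k I phi chi psi)
          | exact (sat_Release_Or_l lam tau T H k I phi chi psi)
          | exact (sat_Since_And_l lam tau T H k I phi chi psi)
          | exact (sat_Release_And_r lam tau T H k I phi chi psi)
          | exact (sat_Trigger_And_r lam tau T H k I phi chi psi)
          | simpl; firstorder ].
Qed.
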